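(* Let $A\subseteq Q_n$ be an extremal set for which there exist $t\in Q_n$ and an integer $r$ such that $B(t,r)\subseteq A\subseteq B(t,r+1)$. Then $A$ is isomorphic to an initial segment of the simplicial order.
   Context: $Q_n$ is the hypercube with vertex set the power set of $[n]=\{1,\dots,n\}$ and metric $d(x,y)=|x\Delta y|$; $B(x,\rho)=\{y: d(x,y)\le\rho\}$. For $A\subseteq Q_n$ and $t>0$, $N^t(A)=\{x:\min_{y\in A}d(x,y)\le t\}$; $N^t(A)$ is minimal if $|N^t(A)|\le|N^t(B)|$ for all $B$ with $|B|=|A|$. $A$ is extremal if $N^t(A)$ and $N^t(Q_n\setminus A)$ are minimal for all integers $t>0$. The lexicographic order on $r$-subsets: $A<_{lex}B$ iff $\min(A\Delta B)\in A$. The simplicial order on $Q_n$: $A<_{sim}B$ iff $|A|<|B|$, or $|A|=|B|$ and $A<_{lex}B$. Two subsets of $Q_n$ are isomorphic if one is the image of the other under an automorphism of $Q_n$ (a map $x\mapsto\sigma(x)\Delta I$ with $\sigma$ a permutation of $[n]$ and $I\subseteq[n]$). *)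

(* The hypercube Q_n has vertex set {set 'I_n}
   (ground set [n] = {1..n} represented by 'I_n = {0..n-1}). *)
From mathcomp Require Import all_boot all_order all_algebra all_fingroup.
Set Implicit Arguments. Unset Strict Implicit. Unset Printing Implicit Defensive.

Section Hypercube.
Variable n : nat.
Notation vtx := {set 'I_n}.

Definition symdiff (x y : vtx) : vtx := (x :\: y) :|: (y :\: x).

Definition dist (x y : vtx) : nat := #|symdiff x y|.

Definition ball (x : vtx) (rho : int) : {set vtx} :=
  [set y | ((dist x y)%:Z <= rho)%R].

Definition nbhd (t : nat) (A : {set vtx}) : {set vtx} :=
  [set x | [exists y in A, dist x y <= t]].

Definition nbhd_minimal (t : nat) (A : {set vtx}) : Prop :=
  forall B : {set vtx}, #|B| = #|A| -> #|nbhd t A| <= #|nbhd t B|.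

Definition extremal (A : {set vtx}) : Prop :=
  forall t : nat, 0 < t -> nbhd_minimal t A /\ nbhd_minimal t (~: A).

Definition lex_lt (x y : vtx) : bool :=
  [exists i : 'I_n, (i \in symdiff x y) && (i \in x) &&
     [forall j : 'I_n, (j < i)%N ==> (j \notin symdiff x y)]].

Definition sim_lt (x y : vtx) : bool :=
  (#|x| < #|y|) || ((#|x| == #|y|) && lex_lt x y).

Definition sim_initial_segment (S : {set vtx}) : Prop :=
  forall x y : vtx, x \in S -> sim_lt y x -> y \in S.

Definition cube_aut (sigma : {perm 'I_n}) (I : vtx) (x : vtx) : vtx :=
  symdiff (sigma @: x) I.

Definition cube_isomorphic (A B : {set vtx}) : Prop :=
  exists (sigma : {perm 'I_n}) (I : vtx), B = [set cube_aut sigma I x | x in A].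

End Hypercube.

From mathcomp Require Import all_boot all_order all_algebra all_fingroup.
From mathcomp Require Import zify.
Set Implicit Arguments. Unset Strict Implicit. Unset Printing Implicit Defensive.

(* After translating by the centre, the ball is centred at the empty set, so
   A = [low k :|: F] where [low k] is the set of all sets of size < k and F is a
   family of k-sets.  The t-neighbourhood of A is then [low (k + t)] together
   with the upper t-shadow of F, and that of its complement is the sets of size
   > k - t together with the lower t-shadow of the k-sets outside F.  So
   extremality says that F has minimal upper shadows, and its complement minimal
   lower shadows, among all families of k-sets of the same size.
   Such a family has a pivot coordinate a: either a lies in every member of F,
   or F contains every k-set through a.  Otherwise a family of the same size
   inside (resp. containing) the star of a coordinate would have a strictly
   smaller shadow on the top (resp. bottom) level.  Moving a to the first
   coordinate and deleting it leaves a shadow-optimal family in one dimension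
   less, so by induction F is, after permuting coordinates, an initial segment
   of the lexicographic order on k-sets; and the sets of size < k followed by
   such a segment form an initial segment of the simplicial order. *)

Section FinsetCard.
Variable T : finType.
Implicit Types A B C S : {set T}.

Lemma card_lt_notin A B : #|A| < #|B| -> exists2 i, i \in B & i \notin A.
Proof. by move=> AB; apply/subsetPn/negP => /subset_leq_card; rewrite leqNgt AB. Qed.

Lemma subset_ext_card (x : {set T}) S j : x \subset S -> #|x| <= j <= #|S| ->
  exists y : {set T}, [/\ x \subset y, y \subset S & #|y| = j].
Proof.
move=> xS; elim: j => [|j IH] /andP[xj jS].
  by exists x; split => //; apply/eqP; rewrite -leqn0.
have [xj' | jx] := ltnP #|x| j.+1.
  have [|y [xy yS yj]] := IH; first by rewrite -ltnS xj' (ltnW jS).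
  have [|a aS ay] := card_lt_notin (A := y) (B := S); first by rewrite yj.
  exists (a |: y); split; first exact: subset_trans xy (subsetUr _ _).
    by rewrite subUset sub1set aS.
  by rewrite cardsU1 ay yj.
by exists x; split => //; apply/eqP; rewrite eqn_leq xj.
Qed.

Lemma eq_sub_card_le1 A B C : #|C| <= 1 ->
  A \subset C -> B \subset C -> #|A| = #|B| -> A = B.
Proof.
move=> /card_le1_eqP C1 AC BC cAB; apply/eqP; rewrite eqEcard cAB leqnn andbT.
apply/subsetP => x xA; have [y yB] : exists y, y \in B.
  by apply/card_gt0P; rewrite -cAB; apply/card_gt0P; exists x.
by rewrite (C1 y x (subsetP BC y yB) (subsetP AC x xA)).
Qed.

Lemma cardsU_disjoint A B : {in A, forall x, x \notin B} -> #|A :|: B| = #|A| + #|B|.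
Proof.
move=> AB; rewrite cardsU; suff -> : A :&: B = set0 by rewrite cards0 subn0.
by apply/setP => x; rewrite !inE; apply/negbTE/andP => -[/AB/negP].
Qed.

End FinsetCard.

Lemma existsb_imset (aT rT : finType) (f : aT -> rT) (A : {set aT}) (P : pred rT) :
  [exists y in f @: A, P y] = [exists x in A, P (f x)].
Proof.
apply/existsP/existsP => [[_ /andP[/imsetP[x xA ->] Px]]|[x /andP[xA Px]]].
  by exists x; rewrite xA.
by exists (f x); rewrite imset_f.
Qed.

(** * Relabelling coordinates *)

Section Relabel.
Variable N : nat.
Implicit Types (s : {perm 'I_N}) (x y : {set 'I_N}) (F G : {set {set 'I_N}}).

Lemma mem_pimset s x i : (i \in s @: x) = (s^-1%g i \in x).
Proof. by rewrite -{1}(permKV s i) mem_imset //; exact: perm_inj. Qed.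

Lemma card_pimset s x : #|s @: x| = #|x|.
Proof. exact/card_imset/perm_inj. Qed.

Lemma pimsetK s : cancel (fun x => s @: x) (fun x => s^-1%g @: x).
Proof. by move=> x; apply/setP => i; rewrite !mem_pimset invgK permK. Qed.

Lemma pimsetKV s : cancel (fun x => s^-1%g @: x) (fun x => s @: x).
Proof. by move=> x; apply/setP => i; rewrite !mem_pimset invgK permKV. Qed.

Lemma pimset_sub s x y : (s @: x \subset s @: y) = (x \subset y).
Proof.
apply/idP/idP => [sxy|]; last exact: imsetS.
by rewrite -(pimsetK s x) -(pimsetK s y); exact: imsetS.
Qed.

Lemma in_symdiff x y i : (i \in symdiff x y) = (i \in x) (+) (i \in y).
Proof. by rewrite !inE; case: (i \in x); case: (i \in y). Qed.

Lemma pimset_symdiff s x y : s @: symdiff x y = symdiff (s @: x) (s @: y).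
Proof. by apply/setP => i; rewrite mem_pimset !in_symdiff !mem_pimset. Qed.

Definition relabel s F : {set {set 'I_N}} := [set s @: x | x : {set 'I_N} in F].

Lemma mem_relabel s F y : (y \in relabel s F) = (s^-1%g @: y \in F).
Proof.
apply/imsetP/idP => [[x xF ->]|yF]; first by rewrite pimsetK.
by exists (s^-1%g @: y) => //; rewrite pimsetKV.
Qed.

Lemma card_relabel s F : #|relabel s F| = #|F|.
Proof. exact/card_imset/imset_inj/perm_inj. Qed.

Lemma relabel1 F : relabel 1 F = F.
Proof.
apply/setP => y; rewrite mem_relabel; congr (_ \in F).
by apply/setP => i; rewrite mem_pimset !invg1 perm1.
Qed.

Lemma relabelM s1 s2 F : relabel (s1 * s2) F = relabel s2 (relabel s1 F).
Proof.
apply/setP => y; rewrite !mem_relabel; congr (_ \in F).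
by apply/setP => i; rewrite !mem_pimset !invgK permM.
Qed.

Lemma relabelD s F G : relabel s (F :\: G) = relabel s F :\: relabel s G.
Proof. by apply/setP => y; rewrite !inE !mem_relabel !inE. Qed.

Lemma relabelU s F G : relabel s (F :|: G) = relabel s F :|: relabel s G.
Proof. exact: imsetU. Qed.

End Relabel.

(** * Shadows of families of k-sets in a subcube *)

Section Subcube.
Variable N : nat.
Notation T := {set 'I_N}.
Implicit Types (s : {perm 'I_N}) (f g x y z : T) (F G H S : {set T}).

(* The subcube on the coordinates >= d: the induction moves the pivot
   coordinate to d and then discards it. *)
Definition tail d : T := [set i : 'I_N | d <= i].

Definition level d k : {set T} := [set x : T | (x \subset tail d) && (#|x| == k)].

Definition upshadow d t k F : {set T} :=
  [set x : T | [&& x \subset tail d, #|x| == k + t & [exists f in F, f \subset x]]].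

Definition downshadow t k G : {set T} :=
  [set x : T | (#|x| + t == k) && [exists g in G, x \subset g]].

Definition shadow_optimal d k F : Prop :=
  forall t, 0 < t -> forall F2, F2 \subset level d k -> #|F2| = #|F| ->
    #|upshadow d t k F| <= #|upshadow d t k F2| /\
    #|downshadow t k (level d k :\: F)| <= #|downshadow t k (level d k :\: F2)|.

Definition lex_initial d k (S : {set T}) : Prop :=
  forall x y, x \in S -> y \in level d k -> lex_lt y x -> y \in S.

Lemma level_tail d k x : x \in level d k -> x \subset tail d.
Proof. by rewrite inE => /andP[]. Qed.

Lemma card_level d k x : x \in level d k -> #|x| = k.
Proof. by rewrite inE => /andP[_ /eqP]. Qed.

Lemma upshadow_level d t k F : upshadow d t k F \subset level d (k + t).
Proof. by apply/subsetP => x; rewrite !inE => /and3P[-> -> _]. Qed.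

Lemma eq_tail_setD1 d x i : x \subset tail d -> i \in tail d -> i \notin x ->
  #|tail d| = #|x|.+1 -> x = tail d :\ i.
Proof.
move=> xd id ix cx; apply/eqP; rewrite eqEcard subsetD1 xd ix /=.
by move: cx; rewrite (cardsD1 i) id add1n => -[->].
Qed.

Lemma level_nontrivial d k F f0 g0 : F \subset level d k ->
  f0 \in F -> g0 \in level d k :\: F -> 0 < k < #|tail d|.
Proof.
move=> Fl f0F /setDP[g0l g0F]; have f0l := subsetP Fl _ f0F.
apply/andP; split.
  rewrite lt0n; apply: contraNneq g0F => k0.
  have empty z : z \in level d k -> z = set0 by move/card_level; rewrite k0; apply: cards0_eq.
  by rewrite (empty _ g0l) -(empty _ f0l).
rewrite ltnNge; apply: contraNN g0F => dk.
have full z : z \in level d k -> z = tail d.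
  by move=> zl; apply/eqP; rewrite eqEcard (level_tail zl) (card_level zl).
by rewrite (full _ g0l) -(full _ f0l).
Qed.

Lemma level_sub_upshadow d t k F : F \subset level d k -> (k + t).+1 = #|tail d| ->
  {in tail d, forall a, exists2 f, f \in F & a \notin f} ->
  level d (k + t) \subset upshadow d t k F.
Proof.
move=> Fl kt avoid; apply/subsetP => y yl.
have [|i id iy] := card_lt_notin (A := y) (B := tail d); first by rewrite (card_level yl) -kt.
have [f fF fi] := avoid i id.
rewrite inE (level_tail yl) (card_level yl) eqxx; apply/exists_inP; exists f => //.
rewrite (eq_tail_setD1 (level_tail yl) id iy) ?(card_level yl) //.
by rewrite subsetD1 fi (level_tail (subsetP Fl _ fF)).
Qed.

Lemma downshadow_sub_level d t k G : G \subset level d k ->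
  downshadow t k G \subset level d (k - t).
Proof.
move=> Gl; apply/subsetP => x; rewrite inE => /andP[/eqP xk /exists_inP[g /(subsetP Gl) gl xg]].
by rewrite inE (subset_trans xg (level_tail gl)) -xk addnK eqxx.
Qed.

Lemma level_sub_downshadow d t k G : t.+1 = k ->
  {in tail d, forall a, exists2 x, x \in G & a \in x} -> level d 1 \subset downshadow t k G.
Proof.
move=> tk hit; apply/subsetP => y yl.
have /cards1P[i yi] : #|y| == 1 by rewrite (card_level yl).
have [|x xG ix] := hit i; first by apply: (subsetP (level_tail yl)); rewrite yi set11.
by rewrite inE (card_level yl) add1n tk eqxx; apply/exists_inP; exists x; rewrite // yi sub1set.
Qed.

Lemma downshadowU t k G H :
  downshadow t k (G :|: H) = downshadow t k G :|: downshadow t k H.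
Proof.
apply/setP => x; rewrite !inE -andb_orr; congr (_ && _).
apply/existsP/orP => [[g /andP[]]|[]/existsP[g /andP[gG xg]]].
- by rewrite inE => /orP[] gGH xg; [left|right]; apply/existsP; exists g; rewrite gGH.
- by exists g; rewrite inE gG.
- by exists g; rewrite inE gG orbT.
Qed.

Lemma downshadow_level d t k : k <= #|tail d| ->
  downshadow t k (level d k) = [set x : T | (x \subset tail d) && (#|x| + t == k)].
Proof.
move=> kd; apply/setP => x; rewrite inE [in RHS]inE [RHS]andbC.
case: (#|x| + t =P k) => //= xk.
apply/existsP/idP => [[g /andP[]]|xd].
  by rewrite inE => /andP[gd _] /subset_trans; apply.
have [|g [xg gd gk]] := subset_ext_card (j := k) xd; first by rewrite kd andbT -xk leq_addr.
by exists g; rewrite inE gd gk eqxx.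
Qed.

Lemma lex_lt_asym x y : lex_lt x y -> ~~ lex_lt y x.
Proof.
case/existsP => i /andP[/andP[i1 i2] /forallP i3]; apply/negP.
case/existsP => j /andP[/andP[j1 j2] /forallP j3].
move: i1 j1; rewrite !in_symdiff => i1 j1.
case: (ltngtP i j) => [lt|lt|eq].
- by have := j3 i; rewrite lt in_symdiff addbC i1.
- by have := i3 j; rewrite lt in_symdiff addbC j1.
- by move: i1; rewrite i2 (val_inj eq) j2.
Qed.

Lemma lex_lt_pivot d (D : 'I_N) x y : nat_of_ord D = d ->
  x \subset tail d -> y \subset tail d -> D \in x -> D \notin y -> lex_lt x y.
Proof.
move=> eD xd yd Dx Dy; apply/existsP; exists D.
rewrite in_symdiff Dx (negbTE Dy) /=; apply/forallP => j; apply/implyP => jD.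
have notin (z : T) : z \subset tail d -> j \notin z.
  by move=> zd; apply/negP => /(subsetP zd); rewrite inE; lia.
by rewrite in_symdiff (negbTE (notin x xd)) (negbTE (notin y yd)).
Qed.

Lemma lex_lt_setD1 (D : 'I_N) x y : D \in x -> D \in y ->
  lex_lt (y :\ D) (x :\ D) = lex_lt y x.
Proof.
move=> Dx Dy.
have eq_symdiff : symdiff (y :\ D) (x :\ D) = symdiff y x.
  apply/setP => i; rewrite !in_symdiff !inE.
  by case: (eqVneq i D) => [->|]; rewrite ?Dx ?Dy.
rewrite /lex_lt eq_symdiff; apply: eq_existsb => i.
case iyx : (i \in symdiff y x) => //=.
have /negPf iD : i != D by apply: contraTneq iyx => ->; rewrite in_symdiff Dx Dy.
by rewrite !inE iD.
Qed.

Definition fixes_below s d : Prop := forall i : 'I_N, i < d -> s i = i.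

Lemma fixes_below1 d : fixes_below 1 d.
Proof. by move=> i _; rewrite perm1. Qed.

Lemma fixes_belowW s d e : e <= d -> fixes_below s d -> fixes_below s e.
Proof. by move=> ed fs i ie; apply: fs; apply: leq_trans ed. Qed.

Lemma fixes_belowV s d : fixes_below s d -> fixes_below s^-1 d.
Proof. by move=> fs i id; rewrite -{1}(fs i id) permK. Qed.

Lemma fixes_belowM s1 s2 d :
  fixes_below s1 d -> fixes_below s2 d -> fixes_below (s1 * s2) d.
Proof. by move=> f1 f2 i id; rewrite permM f1 // f2. Qed.

Lemma fixes_below_leq s d i : fixes_below s d -> (d <= s i) = (d <= i).
Proof.
move=> fs; case: (leqP d i) => di; last by rewrite fs // leqNgt di.
case: (leqP d (s i)) => // sid.
by have /perm_inj si := fs _ sid; move: sid; rewrite si ltnNge di.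
Qed.

Lemma pimset_tail s d : fixes_below s d -> s @: tail d = tail d.
Proof.
by move=> fs; apply/setP => i; rewrite mem_pimset !inE (fixes_below_leq _ (fixes_belowV fs)).
Qed.

Lemma pimset_sub_tail s d x : fixes_below s d -> (s @: x \subset tail d) = (x \subset tail d).
Proof. by move=> fs; rewrite -{1}(pimset_tail fs) pimset_sub. Qed.

Lemma pimset_level s d k x : fixes_below s d -> (s @: x \in level d k) = (x \in level d k).
Proof. by move=> fs; rewrite !inE card_pimset pimset_sub_tail. Qed.

Lemma relabel_level s d k : fixes_below s d -> relabel s (level d k) = level d k.
Proof. by move=> fs; apply/setP => y; rewrite mem_relabel (pimset_level _ _ (fixes_belowV fs)). Qed.

Lemma relabel_sub_level s d k F : fixes_below s d ->
  F \subset level d k -> relabel s F \subset level d k.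
Proof. by move=> fs Fl; rewrite -(relabel_level k fs) imsetS. Qed.

Lemma upshadow_relabel s d t k F : fixes_below s d ->
  upshadow d t k (relabel s F) = relabel s (upshadow d t k F).
Proof.
move=> fs; apply/setP => y; rewrite mem_relabel !inE existsb_imset card_pimset.
rewrite (pimset_sub_tail _ (fixes_belowV fs)); congr [&& _, _ & _]; apply: eq_existsb => f.
by rewrite -[in s @: f \subset _](pimsetKV s y) pimset_sub.
Qed.

Lemma downshadow_relabel s t k G :
  downshadow t k (relabel s G) = relabel s (downshadow t k G).
Proof.
apply/setP => y; rewrite mem_relabel !inE existsb_imset card_pimset.
congr (_ && _); apply: eq_existsb => g.
by rewrite -(pimset_sub s^-1) pimsetK.
Qed.

Lemma card_upshadow_relabel s d t k F : fixes_below s d ->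
  #|upshadow d t k (relabel s F)| = #|upshadow d t k F|.
Proof. by move=> fs; rewrite upshadow_relabel // card_relabel. Qed.

Lemma card_downshadow_relabel s d t k F : fixes_below s d ->
  #|downshadow t k (level d k :\: relabel s F)| = #|downshadow t k (level d k :\: F)|.
Proof.
by move=> fs; rewrite -{1}(relabel_level k fs) -relabelD downshadow_relabel card_relabel.
Qed.

Lemma shadow_optimal_relabel s d k F : fixes_below s d ->
  shadow_optimal d k F -> shadow_optimal d k (relabel s F).
Proof.
move=> fs optF t t0 F2 F2l cF2; have fsV := fixes_belowV fs.
have F2l' : relabel s^-1 F2 \subset level d k.
  by rewrite -(relabel_level k fsV); apply: imsetS.
have [] := optF t t0 _ F2l'; first by rewrite card_relabel cF2 card_relabel.
by rewrite !card_upshadow_relabel // !card_downshadow_relabel.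
Qed.

(** * Deleting a pivot coordinate *)

Section Pivot.
Variables (d : nat) (D : 'I_N).
Hypothesis eD : nat_of_ord D = d.

Lemma tailS : tail d.+1 = tail d :\ D.
Proof. by apply/setP => i; rewrite !inE -val_eqE /= eD; lia. Qed.

Lemma pivot_tail : D \in tail d.
Proof. by rewrite inE eD. Qed.

Lemma card_tail : #|tail d| = #|tail d.+1|.+1.
Proof. by rewrite tailS (cardsD1 D) pivot_tail. Qed.

Lemma sub_tailS x : (x \subset tail d.+1) = (x \subset tail d) && (D \notin x).
Proof. by rewrite tailS subsetD1. Qed.

Lemma levelS k x : (x \in level d.+1 k) = (x \in level d k) && (D \notin x).
Proof. by rewrite !inE sub_tailS andbAC. Qed.

Lemma level_setU1 k x : x \in level d.+1 k -> D |: x \in level d k.+1.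
Proof.
rewrite levelS inE => /andP[/andP[xd /eqP xk] Dx].
by rewrite inE subUset sub1set pivot_tail xd cardsU1 Dx xk add1n eqxx.
Qed.

Lemma mem_level_setD1 k x : D \in x -> (x :\ D \in level d.+1 k) = (x \in level d k.+1).
Proof.
move=> Dx; apply/idP/idP => [/level_setU1|]; first by rewrite setD1K.
rewrite inE => /andP[xd /eqP xk]; rewrite levelS !inE eqxx /= andbT.
rewrite (subset_trans (subD1set _ _) xd) /=.
by move: xk; rewrite (cardsD1 D) Dx add1n => -[->].
Qed.

Lemma level_notin k H : H \subset level d.+1 k -> {in H, forall x, D \notin x}.
Proof. by move=> Hl x /(subsetP Hl); rewrite levelS => /andP[]. Qed.

Lemma pimset_pivot s : fixes_below s d.+1 -> s D = D.
Proof. by move=> fs; apply: fs; rewrite eD. Qed.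

Lemma pivot_pimset s x : fixes_below s d.+1 -> (D \in s @: x) = (D \in x).
Proof. by move=> fs; rewrite mem_pimset (pimset_pivot (fixes_belowV fs)). Qed.

Definition add_pivot H : {set T} := [set D |: x | x : T in H].

Definition link k F : {set T} := [set x in level d.+1 k | D |: x \in F].

Definition star k : {set T} := [set x in level d k | D \in x].

Lemma card_add_pivot H : {in H, forall x, D \notin x} -> #|add_pivot H| = #|H|.
Proof.
move=> HD; apply: card_in_imset => x y xH yH e.
by rewrite -(setU1K (HD _ xH)) -(setU1K (HD _ yH)) e.
Qed.

Lemma add_pivot_level k H : H \subset level d.+1 k -> add_pivot H \subset level d k.+1.
Proof.
by move=> Hl; apply/subsetP => _ /imsetP[x /(subsetP Hl) xl ->]; apply: level_setU1.
Qed.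

Lemma link_level k F : link k F \subset level d.+1 k.
Proof. by apply/subsetP => x; rewrite inE => /andP[]. Qed.

Lemma add_pivot_link k F : F \subset level d k.+1 -> {in F, forall f, D \in f} ->
  add_pivot (link k F) = F.
Proof.
move=> Fl FD; apply/setP => y; apply/imsetP/idP => [[x + ->] | yF].
  by rewrite inE => /andP[].
exists (y :\ D); last by rewrite setD1K ?FD.
by rewrite inE setD1K ?FD // yF mem_level_setD1 ?FD ?(subsetP Fl).
Qed.

Lemma mem_add_pivot H x : {in H, forall y, D \notin y} -> D \in x ->
  (x \in add_pivot H) = (x :\ D \in H).
Proof.
move=> HD Dx; apply/imsetP/idP => [[y yH ->]|xH]; first by rewrite setU1K ?HD.
by exists (x :\ D); rewrite ?setD1K.
Qed.

Lemma notin_add_pivot H x : D \notin x -> (x \in add_pivot H) = false.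
Proof. by move=> Dx; apply/negbTE/imsetP => -[y _ xy]; move: Dx; rewrite xy setU11. Qed.

Lemma upshadow_notin t k H : {in upshadow d.+1 t k H, forall x, D \notin x}.
Proof. by move=> x; rewrite inE sub_tailS => /andP[/andP[]]. Qed.

Lemma upshadow_add_pivot t k H : H \subset level d.+1 k ->
  upshadow d t k.+1 (add_pivot H) = add_pivot (upshadow d.+1 t k H).
Proof.
move=> Hl; apply/setP => y; rewrite inE existsb_imset.
apply/idP/imsetP => [/and3P[yd /eqP yk /existsP[h /andP[hH]]] | [z + ->]].
  rewrite subUset sub1set => /andP[Dy hy].
  exists (y :\ D); last by rewrite setD1K.
  rewrite inE tailS setSD //=; apply/andP; split.
    by move: yk; rewrite (cardsD1 D) Dy add1n addSn => -[->].
  by apply/existsP; exists h; rewrite hH subsetD1 hy (level_notin Hl hH).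
rewrite inE sub_tailS => /and3P[/andP[zd Dz] /eqP zk /existsP[h /andP[hH hz]]].
rewrite subUset sub1set pivot_tail zd cardsU1 Dz zk add1n addSn eqxx /=.
by apply/existsP; exists h; rewrite hH setUS.
Qed.

Lemma downshadow_add_pivot t k G : {in G, forall g, D \notin g} ->
  downshadow t k.+1 (add_pivot G) = add_pivot (downshadow t k G) :|: downshadow t k.+1 G.
Proof.
move=> GD; apply/setP => x; rewrite inE [in RHS]inE existsb_imset.
case: (boolP (D \in x)) => Dx.
  have -> : (x \in downshadow t k.+1 G) = false.
    apply/negbTE; rewrite inE negb_and; apply/orP; right.
    by apply/existsPn => g; apply/negP => /andP[/GD/negP gD /subsetP/(_ D Dx)].
  rewrite orbF; apply/andP/imsetP => [[xk /existsP[g /andP[gG xg]]]|[z + ->]].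
    exists (x :\ D); last by rewrite setD1K.
    rewrite inE; apply/andP; split.
      by move: xk; rewrite (cardsD1 D) Dx add1n addSn => /eqP[->].
    by apply/existsP; exists g; rewrite gG -(setU1K (GD _ gG)) setSD.
  rewrite inE => /andP[/eqP zk /existsP[g /andP[gG zg]]].
  have Dz : D \notin z by apply: contra (GD _ gG); apply: (subsetP zg).
  split; first by rewrite cardsU1 Dz add1n addSn zk.
  by apply/existsP; exists g; rewrite gG setUS.
have xD : x :\: [set D] = x by apply/setDidPl; rewrite disjoint_sym disjoints1.
rewrite notin_add_pivot //= inE; congr (_ && _); apply: eq_existsb => g.
by rewrite -subDset xD.
Qed.

Lemma level_setD_add_pivot k H : H \subset level d.+1 k ->
  level d k.+1 :\: add_pivot H = level d.+1 k.+1 :|: add_pivot (level d.+1 k :\: H).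
Proof.
move=> Hl; have HD := level_notin Hl; have GD := level_notin (subsetDl (level d.+1 k) H).
apply/setP => x; rewrite in_setD in_setU levelS.
case: (boolP (D \in x)) => Dx /=; last by rewrite !notin_add_pivot // andbT orbF.
by rewrite andbF !mem_add_pivot ?in_setD ?mem_level_setD1.
Qed.

Lemma card_downshadow_link t k H : H \subset level d.+1 k -> k.+1 <= #|tail d.+1| ->
  #|downshadow t k.+1 (level d k.+1 :\: add_pivot H)| =
  #|[set x : T | (x \subset tail d.+1) && (#|x| + t == k.+1)]| +
  #|downshadow t k (level d.+1 k :\: H)|.
Proof.
move=> Hl kd; set Z := [set x : T | _]; set R := downshadow t k _.
have GD := level_notin (subsetDl (level d.+1 k) H).
have RD : {in R, forall x, D \notin x}.
  move=> x; rewrite inE => /andP[_ /existsP[g /andP[/GD gD xg]]].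
  by apply: contra gD; apply: (subsetP xg).
have sub_Z : downshadow t k.+1 (level d.+1 k :\: H) \subset Z.
  apply/subsetP => x; rewrite !inE => /andP[-> /existsP[g /andP[]]].
  by rewrite !inE => /and3P[_ gd _] /subset_trans->.
rewrite level_setD_add_pivot // downshadowU downshadow_level // -/Z.
rewrite downshadow_add_pivot // [add_pivot R :|: _]setUC setUA (setUidPl sub_Z).
rewrite cardsU_disjoint ?card_add_pivot // => x.
by rewrite inE sub_tailS => /andP[/andP[_ Dx] _]; rewrite notin_add_pivot.
Qed.

Lemma shadow_optimal_link k F : F \subset level d k.+1 -> {in F, forall f, D \in f} ->
  k.+1 <= #|tail d.+1| -> shadow_optimal d k.+1 F -> shadow_optimal d.+1 k (link k F).
Proof.
move=> Fl FD kd; set F' := link k F; have F'D := level_notin (link_level k F).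
rewrite -(add_pivot_link Fl FD) -/F' => optF t t0 F2 F2l cF2.
have F2D := level_notin F2l.
have [] := optF t t0 (add_pivot F2) (add_pivot_level F2l).
  by rewrite !card_add_pivot.
rewrite !upshadow_add_pivot ?link_level // !(card_add_pivot (@upshadow_notin _ _ _)).
by rewrite !card_downshadow_link ?link_level // leq_add2l.
Qed.

Lemma star_level k : star k \subset level d k.
Proof. by apply/subsetP => x; rewrite inE => /andP[]. Qed.

Lemma card_star_setU k H : {in H, forall x, D \notin x} -> #|star k :|: H| = #|star k| + #|H|.
Proof.
by move=> HD; apply: cardsU_disjoint => x; rewrite inE => /andP[_]; apply: contraL; apply: HD.
Qed.

Lemma upshadow_star t k H : 0 < k ->
  upshadow d t k (star k :|: H) = star (k + t) :|: upshadow d.+1 t k H.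
Proof.
move=> k0; apply/setP => y; rewrite in_setU [y \in star _]inE [y \in level _ _]inE.
rewrite [y \in upshadow d _ _ _]inE [y \in upshadow d.+1 _ _ _]inE sub_tailS.
case: (boolP (D \in y)) => Dy; rewrite ?andbT ?andbF /= ?orbF.
  apply/and3P/andP => [[] //|[yd /eqP yk]]; split => //; first by rewrite yk.
  have Dsub : [set D] \subset y by rewrite sub1set.
  have [|f [Df fy fk]] := subset_ext_card (j := k) Dsub; first by rewrite cards1 k0 yk leq_addr.
  apply/existsP; exists f; rewrite fy andbT in_setU [f \in star _]inE.
  by rewrite inE (subset_trans fy yd) fk eqxx (subsetP Df _ (set11 D)).
congr [&& _, _ & _]; apply: eq_existsb => f; rewrite in_setU [f \in star _]inE.
case: (boolP (f \subset y)) => fy; rewrite ?andbF ?andbT //.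
by rewrite (contraNF (subsetP fy D) Dy) andbF.
Qed.

Lemma card_upshadow_star t k H : 0 < k ->
  #|upshadow d t k (star k :|: H)| = #|star (k + t)| + #|upshadow d.+1 t k H|.
Proof. by move=> k0; rewrite upshadow_star // card_star_setU //; apply: upshadow_notin. Qed.

Lemma level_setD_star k H : level d k :\: (star k :|: H) = level d.+1 k :\: H.
Proof.
apply/setP => x; rewrite !in_setD in_setU levelS [x \in star k]inE.
by case: (x \in level d k); case: (D \in x); case: (x \in H).
Qed.

Lemma star_setU_level k F : F \subset level d k -> star k \subset F ->
  F = star k :|: (F :&: level d.+1 k).
Proof.
move=> Fl sF; apply/setP => x; rewrite in_setU in_setI levelS.
have [xF|xF] := boolP (x \in F); last by rewrite (contraNF (subsetP sF x) xF).
by rewrite [x \in star k]inE (subsetP Fl _ xF) /= orbN.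
Qed.

Lemma shadow_optimal_restrict k F : 0 < k -> F \subset level d k -> star k \subset F ->
  shadow_optimal d k F -> shadow_optimal d.+1 k (F :&: level d.+1 k).
Proof.
move=> k0 Fl sF; set F' := F :&: level d.+1 k; have F'D := level_notin (subsetIr F (level d.+1 k)).
rewrite [in shadow_optimal _ _ F](star_setU_level Fl sF) -/F' => optF t t0 F2 F2l cF2.
have F2D := level_notin F2l.
have [] := optF t t0 (star k :|: F2).
- rewrite subUset star_level; apply/subsetP => x /(subsetP F2l).
  by rewrite levelS => /andP[].
- by rewrite !card_star_setU // cF2.
by rewrite !card_upshadow_star // !level_setD_star leq_add2l.
Qed.

Lemma link_relabel s k F : fixes_below s d.+1 -> link k (relabel s F) = relabel s (link k F).
Proof.
move=> fs; have fsV := fixes_belowV fs; apply/setP => x.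
rewrite [x \in link _ _]inE !mem_relabel [_ \in link _ _]inE (pimset_level k x fsV).
by rewrite imsetU1 pimset_pivot.
Qed.

Lemma star_relabel s k : fixes_below s d.+1 -> relabel s (star k) = star k.
Proof.
move=> fs; have fsV := fixes_belowV fs; apply/setP => x.
rewrite mem_relabel ![_ \in star _]inE pivot_pimset //.
by rewrite (pimset_level k x (fixes_belowW (leqnSn d) fsV)).
Qed.

Lemma relabel_restrict s k F : fixes_below s d.+1 ->
  relabel s (F :&: level d.+1 k) = relabel s F :&: level d.+1 k.
Proof.
move=> fs; apply/setP => x.
by rewrite !mem_relabel !in_setI mem_relabel (pimset_level k _ (fixes_belowV fs)).
Qed.

Lemma lex_initial_link k F : F \subset level d k.+1 -> {in F, forall f, D \in f} ->
  lex_initial d.+1 k (link k F) -> lex_initial d k.+1 F.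
Proof.
move=> Fl FD lexF x y xF yl yx; have Dx := FD x xF.
have Dy : D \in y.
  apply: contraT => Dy; move: (lex_lt_asym yx).
  by rewrite (lex_lt_pivot eD (level_tail (subsetP Fl _ xF)) (level_tail yl) Dx Dy).
have : y :\ D \in link k F.
  apply: (lexF (x :\ D)); last by rewrite lex_lt_setD1.
    by rewrite inE mem_level_setD1 // (subsetP Fl) //= setD1K.
  by rewrite mem_level_setD1.
by rewrite inE setD1K // => /andP[].
Qed.

Lemma lex_initial_restrict k F : F \subset level d k -> star k \subset F ->
  lex_initial d.+1 k (F :&: level d.+1 k) -> lex_initial d k F.
Proof.
move=> Fl sF lexF x y xF yl yx.
have [Dy|Dy] := boolP (D \in y); first by apply: (subsetP sF); rewrite inE yl.
have xl := subsetP Fl _ xF.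
have Dx : D \notin x.
  apply: contraL (lex_lt_asym yx) => Dx; rewrite negbK.
  exact: lex_lt_pivot eD (level_tail xl) (level_tail yl) Dx Dy.
have : y \in F :&: level d.+1 k by apply: (lexF x); rewrite ?in_setI ?levelS ?xF ?xl ?yl.
by rewrite inE => /andP[].
Qed.

Lemma lex_initial_pivot k F : F \subset level d k -> shadow_optimal d k F ->
  0 < k -> k < #|tail d| -> {in F, forall f, D \in f} \/ star k \subset F ->
  (forall k' F', F' \subset level d.+1 k' -> shadow_optimal d.+1 k' F' ->
     exists2 s, fixes_below s d.+1 & lex_initial d.+1 k' (relabel s F')) ->
  exists2 s, fixes_below s d.+1 & lex_initial d k (relabel s F).
Proof.
move=> Fl optF k0 kd [FD | sF] IH.
  case: k k0 kd Fl optF FD => // k _ kd Fl optF FD.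
  have kd' : k.+1 <= #|tail d.+1| by rewrite -ltnS -card_tail.
  have [s fs lexF] := IH k _ (link_level k F) (shadow_optimal_link Fl FD kd' optF).
  exists s => //; have fsV := fixes_belowV fs.
  apply: lex_initial_link; last by rewrite link_relabel.
    exact: relabel_sub_level (fixes_belowW (leqnSn d) fs) Fl.
  by move=> y; rewrite mem_relabel => /FD; rewrite pivot_pimset.
have [s fs lexF] := IH k _ (subsetIr F _) (shadow_optimal_restrict k0 Fl sF optF).
exists s => //; apply: lex_initial_restrict; last by rewrite -relabel_restrict.
  exact: relabel_sub_level (fixes_belowW (leqnSn d) fs) Fl.
by rewrite -(star_relabel k fs) imsetS.
Qed.

Lemma exists_common_coord k F g0 : F \subset level d k -> shadow_optimal d k F ->
  k < #|tail d| -> g0 \in level d k :\: F -> #|F| <= #|star k| ->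
  exists2 a, a \in tail d & {in F, forall f, a \in f}.
Proof.
move=> Fl optF kd /setDP[g0l g0F] Fstar.
have [kd1 | kd1] := eqVneq #|tail d| k.+1.
  have [|i id ig0] := card_lt_notin (A := g0) (B := tail d); first by rewrite (card_level g0l).
  exists i => // f fF; apply: contraT => fi.
  have top z : z \in level d k -> i \notin z -> z = tail d :\ i.
    by move=> zl iz; apply: eq_tail_setD1 (level_tail zl) id iz _; rewrite (card_level zl).
  by move: g0F; rewrite (top _ g0l ig0) -(top _ (subsetP Fl _ fF) fi) fF.
have [/exists_inP[a ad /forall_inP aF] | noa] :=
  boolP [exists a in tail d, [forall f in F, a \in f]]; first by exists a.
have avoid a : a \in tail d -> exists2 f, f \in F & a \notin f.
  by move=> ad; move/exists_inPn: noa => /(_ a ad)/forall_inPn[f]; exists f.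
(* Otherwise a family of the same size inside the star of D has a strictly
   smaller upper shadow on the level just below the top. *)
set t := #|tail d| - k.+1.
have t0 : 0 < t by move/eqP: kd1; rewrite /t; lia.
have kt : (k + t).+1 = #|tail d| by move/eqP: kd1; rewrite /t; lia.
have [|F2 [_ F2s cF2]] := subset_ext_card (sub0set (star k)) (j := #|F|).
  by rewrite cards0 Fstar.
have [up_le _] := optF t t0 F2 (subset_trans F2s (star_level k)) cF2.
suff : #|upshadow d t k F2| < #|upshadow d t k F| by rewrite ltnNge up_le.
apply: leq_trans (subset_leq_card (level_sub_upshadow Fl kt avoid)).
apply: proper_card; rewrite properE upshadow_level /=; apply/subsetPn; exists (tail d :\ D).
  by rewrite inE subD1set -tailS -eqSS -card_tail kt eqxx.
rewrite inE; apply/negP => /and3P[_ _ /exists_inP[f2 /(subsetP F2s)]].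
by rewrite inE => /andP[_ Df2] /subsetP/(_ D Df2); rewrite !inE eqxx.
Qed.

Lemma exists_full_star k F : F \subset level d k -> shadow_optimal d k F -> 0 < k ->
  #|star k| < #|F| -> exists2 a, a \in tail d & {in level d k, forall x, a \in x -> x \in F}.
Proof.
move=> Fl optF k0 Fstar.
have [k1 | k1] := eqVneq k 1.
  have [f0 f0F] : exists f0, f0 \in F by apply/card_gt0P; apply: leq_ltn_trans Fstar.
  have f0l := subsetP Fl _ f0F.
  have /cards1P[a f0a] : #|f0| == 1 by rewrite (card_level f0l) k1.
  exists a => [|x xl ax]; first by apply: (subsetP (level_tail f0l)); rewrite f0a set11.
  have /cards1P[b xb] : #|x| == 1 by rewrite (card_level xl) k1.
  by move: ax; rewrite xb inE => /eqP <-; rewrite -f0a.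
have [/exists_inP[a ad /forall_inP aF] | noa] :=
  boolP [exists a in tail d, [forall x in level d k, (a \in x) ==> (x \in F)]].
  by exists a => // x xl; apply/implyP/aF.
have hit a : a \in tail d -> exists2 x, x \in level d k :\: F & a \in x.
  move=> ad; move/exists_inPn: noa => /(_ a ad)/forall_inPn[x xl].
  by rewrite negb_imply => /andP[ax xF]; exists x => //; apply/setDP.
(* Otherwise a family of the same size containing the star of D leaves a
   complement with a strictly smaller lower shadow on the singletons. *)
have [|E [_ E_nstar cE]] :=
  subset_ext_card (sub0set (level d k :\: star k)) (j := #|F| - #|star k|).
  by rewrite cards0 cardsD (setIidPr (star_level k)) leq_sub2r // subset_leq_card.
set F2 := star k :|: E.
have F2l : F2 \subset level d k.
  by rewrite subUset star_level (subset_trans E_nstar) // subsetDl.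
have cF2 : #|F2| = #|F|.
  rewrite cardsU_disjoint ?cE; first by rewrite subnKC // ltnW.
  by move=> x xs; apply: contraL xs => /(subsetP E_nstar); rewrite inE => /andP[].
have t0 : 0 < k.-1 by rewrite -subn1 subn_gt0 ltn_neqAle eq_sym k1.
have [_ down_le] := optF k.-1 t0 F2 F2l cF2.
suff : #|downshadow k.-1 k (level d k :\: F2)| < #|downshadow k.-1 k (level d k :\: F)|.
  by rewrite ltnNge down_le.
apply: leq_trans (subset_leq_card (level_sub_downshadow (prednK k0) hit)).
have k_pred : k - k.-1 = 1 by lia.
apply: proper_card; rewrite properE -{1}k_pred downshadow_sub_level ?subsetDl //=.
apply/subsetPn; exists [set D]; first by rewrite inE sub1set pivot_tail cards1.
rewrite inE cards1; apply/negP => /andP[_ /exists_inP[g /setDP[gl gF2]]].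
by rewrite sub1set => Dg; move: gF2; rewrite /F2 in_setU [g \in star _]inE gl Dg.
Qed.

Lemma exists_pivot k F g0 : F \subset level d k -> shadow_optimal d k F ->
  0 < k -> k < #|tail d| -> g0 \in level d k :\: F ->
  exists2 a, a \in tail d &
    {in F, forall f, a \in f} \/ {in level d k, forall x, a \in x -> x \in F}.
Proof.
move=> Fl optF k0 kd g0lF; have [small | large] := leqP #|F| #|star k|.
  by have [a ad aF] := exists_common_coord Fl optF kd g0lF small; exists a; [|left].
by have [a ad aF] := exists_full_star Fl optF k0 large; exists a; [|right].
Qed.

Lemma fixes_below_swap a : a \in tail d -> fixes_below (tperm a D) d.
Proof.
rewrite inE => da i id; rewrite tpermD //.
  by apply: contraTneq id => <-; rewrite -leqNgt.
by apply: contraTneq id => <-; rewrite eD ltnn.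
Qed.

Lemma pivot_relabel_swap a F : {in F, forall f, a \in f} ->
  {in relabel (tperm a D) F, forall f, D \in f}.
Proof. by move=> aF y; rewrite mem_relabel => /aF; rewrite mem_pimset invgK tpermL. Qed.

Lemma star_sub_relabel_swap a k F : a \in tail d ->
  {in level d k, forall x, a \in x -> x \in F} -> star k \subset relabel (tperm a D) F.
Proof.
move=> ad aF; apply/subsetP => x; rewrite inE => /andP[xl Dx]; rewrite mem_relabel.
apply: aF; last by rewrite mem_pimset invgK tpermL.
by rewrite (pimset_level k x (fixes_belowV (fixes_below_swap ad))).
Qed.

End Pivot.

(** * Shadow-optimal families are lex-initial up to relabelling *)

Lemma lex_initial_tail0 d k S : #|tail d| = 0 -> S \subset level d k -> lex_initial d k S.
Proof.
move=> /cards0_eq d0 Sl x y /(subsetP Sl) xl yl.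
have empty z : z \in level d k -> z = set0 by move/level_tail; rewrite d0 subset0 => /eqP.
by rewrite (empty x xl) (empty y yl) => lt; move: (lex_lt_asym lt); rewrite lt.
Qed.

Lemma shadow_optimal_lex_initial d k F : F \subset level d k -> shadow_optimal d k F ->
  exists2 s, fixes_below s d & lex_initial d k (relabel s F).
Proof.
move Hm: #|tail d| => m; elim: m d Hm k F => [|m IH] d cd k F Fl optF.
  by exists 1%g; [exact: fixes_below1 | apply: lex_initial_tail0; rewrite ?relabel1].
have [-> | [f0 f0F]] := set_0Vmem F.
  by exists 1%g; [exact: fixes_below1 | move=> x y; rewrite relabel1 inE].
have [levF | /subsetPn[g0 g0l g0F]] := boolP (level d k \subset F).
  by exists 1%g; [exact: fixes_below1 | move=> x y _ yl _; rewrite relabel1 (subsetP levF)].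
have g0lF : g0 \in level d k :\: F by apply/setDP.
have /andP[k0 kd] := level_nontrivial Fl f0F g0lF.
have [i id] : exists i, i \in tail d by apply/card_gt0P; rewrite cd.
have dN : d < N by move: id; rewrite inE => /leq_ltn_trans; apply.
pose D := Ordinal dN; have eD : nat_of_ord D = d by [].
have [a ad aF] := exists_pivot eD Fl optF k0 kd g0lF.
pose tau := tperm a D; have ftau : fixes_below tau d := fixes_below_swap eD ad.
have tauF : {in relabel tau F, forall f, D \in f} \/ star d D k \subset relabel tau F.
  case: aF => aF; first by left; exact: pivot_relabel_swap.
  by right; exact: (star_sub_relabel_swap eD ad).
have cd' : #|tail d.+1| = m by move: cd; rewrite (card_tail eD) => -[].
have [s fs lexF] := lex_initial_pivot eD (relabel_sub_level ftau Fl)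
  (shadow_optimal_relabel ftau optF) k0 kd tauF (IH d.+1 cd').
exists (tau * s)%g; first exact: fixes_belowM ftau (fixes_belowW (leqnSn d) fs).
by rewrite relabelM.
Qed.

End Subcube.

Arguments tail {N} d.
Arguments level {N} d k.

(** * Extremal sets in the cube *)

Section Cube.
Variable n : nat.
Notation T := {set 'I_n}.
Implicit Types (s : {perm 'I_n}) (x y z : T) (A B F H S : {set T}).

Lemma dist_card x y : dist x y = #|x :\: y| + #|y :\: x|.
Proof.
apply: cardsU_disjoint => i; rewrite !inE => /andP[iy ix]; apply/negP => /andP[].
by rewrite ix.
Qed.

Lemma distC x y : dist x y = dist y x.
Proof. by rewrite /dist /symdiff setUC. Qed.

Lemma leq_card_dist x y : #|x| <= #|y| + dist x y.
Proof. by rewrite dist_card -(cardsID y x) (setIC x) -(cardsID x y); lia. Qed.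

Lemma dist_subset x y : x \subset y -> dist x y = #|y| - #|x|.
Proof.
move=> xy; rewrite dist_card -(cardsID x y) (setIidPr xy).
have /eqP-> : x :\: y == set0 by rewrite setD_eq0.
by rewrite cards0 add0n addKn.
Qed.

Lemma subset_dist x y : #|x| + dist x y <= #|y| -> x \subset y.
Proof.
rewrite dist_card -(cardsID y x) (setIC x) -(cardsID x y) => h.
by rewrite -setD_eq0 -cards_eq0; apply/eqP; lia.
Qed.

(* The ball of radius k - 1 around the empty set. *)
Definition low k : {set T} := [set x : T | #|x| < k].

Lemma in_low k x : (x \in low k) = (#|x| < k).
Proof. by rewrite inE. Qed.

Lemma relabel_low s k : relabel s (low k) = low k.
Proof. by apply/setP => y; rewrite mem_relabel !in_low card_pimset. Qed.

Lemma tail0 : tail 0 = [set: 'I_n].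
Proof. by apply/setP => i; rewrite !inE. Qed.

Lemma level0 k x : (x \in level 0 k) = (#|x| == k).
Proof. by rewrite inE tail0 subsetT. Qed.

Lemma nbhd_low_setU t k H : 0 < k -> H \subset level 0 k ->
  nbhd t (low k :|: H) = low (k + t) :|: upshadow 0 t k H.
Proof.
move=> k0 Hl; have cardH y : y \in H -> #|y| = k by move/(subsetP Hl); rewrite level0 => /eqP.
apply/setP => x; rewrite in_setU in_low [x \in nbhd _ _]inE [x \in upshadow _ _ _ _]inE.
rewrite tail0 subsetT andTb; apply/exists_inP/idP => [[y] | ].
  rewrite in_setU in_low => /orP[yk | yH] dxy; have xy := leq_card_dist x y.
    by apply/orP; left; lia.
  have [//|xk] := ltnP #|x| (k + t); have yk := cardH y yH.
  have xkt : #|x| = k + t by lia.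
  rewrite xkt eqxx andTb; apply/exists_inP; exists y => //.
  by apply: subset_dist; rewrite distC; lia.
case/orP => [xk | /andP[/eqP xk /exists_inP[f fH fx]]].
  have [|y [_ yx yk]] := subset_ext_card (sub0set x) (j := minn #|x| k.-1).
    by rewrite cards0 geq_minl.
  exists y; first by rewrite in_setU in_low yk; apply/orP; left; lia.
  by rewrite distC dist_subset // yk; lia.
exists f; first by rewrite in_setU fH orbT.
by rewrite distC dist_subset // xk (cardH f fH); lia.
Qed.

Lemma nbhd_setC_low_setU t k H : k < n -> H \subset level 0 k ->
  nbhd t (~: (low k :|: H)) = [set x : T | k < #|x| + t] :|: downshadow t k (level 0 k :\: H).
Proof.
move=> kn Hl; apply/setP => x; rewrite in_setU [x \in nbhd _ _]inE [x \in [set _ | _]]inE.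
rewrite [x \in downshadow _ _ _]inE; apply/exists_inP/idP => [[y] | ].
  rewrite in_setC in_setU in_low negb_or -leqNgt => /andP[ky yH] dxy.
  have yx := leq_card_dist y x; rewrite distC in yx.
  have [//|xk] := ltnP k (#|x| + t).
  have [yk xtk] : #|y| = k /\ #|x| + t = k by lia.
  rewrite xtk eqxx andTb; apply/exists_inP; exists y.
    by rewrite in_setD yH level0 yk eqxx.
  by apply: subset_dist; lia.
case/orP => [kx | /andP[/eqP xk /exists_inP[g /setDP[gl gH] xg]]].
  have [|y [xy _ yk]] := subset_ext_card (subsetT x) (j := maxn #|x| k.+1).
    by rewrite leq_maxl cardsT geq_max max_card card_ord kn.
  have ky : k < #|y| by rewrite yk leq_max ltnSn orbT.
  exists y; last by rewrite dist_subset // yk; lia.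
  rewrite in_setC in_setU in_low negb_or -leqNgt (ltnW ky) andTb.
  by apply: contraTN ky => /(subsetP Hl); rewrite level0 => /eqP->; rewrite ltnn.
have gk : #|g| = k by move: gl; rewrite level0 => /eqP.
exists g; first by rewrite in_setC in_setU in_low negb_or gH andbT -leqNgt gk.
by rewrite dist_subset // gk; lia.
Qed.

Lemma card_level0_le1 k : ~~ (0 < k < n) -> #|@level n 0 k| <= 1.
Proof.
move=> k0n; apply/card_le1_eqP => x y; rewrite !level0 => /eqP xk /eqP yk.
have [k0 | kpos] := posnP k.
  by rewrite (cards0_eq (etrans yk k0)) (cards0_eq (etrans xk k0)).
have nk : n <= k by rewrite leqNgt; move: k0n; rewrite kpos.
have full z : #|z| = k -> z = setT.
  by move=> zk; apply/eqP; rewrite eqEcard subsetT cardsT card_ord zk.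
by rewrite (full x xk) (full y yk).
Qed.

Lemma shadow_optimal_extremal k F : F \subset level 0 k -> extremal (low k :|: F) ->
  shadow_optimal 0 k F.
Proof.
move=> Fl extF t t0 F2 F2l cF2.
have [/andP[k0 kn] | k0n] := boolP (0 < k < n); last first.
  by rewrite (eq_sub_card_le1 (card_level0_le1 k0n) F2l Fl cF2).
have cardL H : H \subset level 0 k -> #|low k :|: H| = #|low k| + #|H|.
  move=> Hl; apply: cardsU_disjoint => x; rewrite in_low; apply: contraTN.
  by move/(subsetP Hl); rewrite level0 => /eqP->; rewrite ltnn.
have low_up H : {in low (k + t), forall x, x \notin upshadow 0 t k H}.
  by move=> x; rewrite in_low; apply: contraTN; rewrite inE => /and3P[_ /eqP-> _]; rewrite ltnn.
have high_down G : {in [set x : T | k < #|x| + t], forall x, x \notin downshadow t k G}.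
  by move=> x; rewrite inE; apply: contraTN; rewrite inE => /andP[/eqP-> _]; rewrite ltnn.
have [m1 m2] := extF t t0; split.
  have := m1 (low k :|: F2); rewrite !cardL // cF2 => /(_ erefl).
  by rewrite !nbhd_low_setU // !(cardsU_disjoint (low_up _)) leq_add2l.
have cC : #|~: (low k :|: F2)| = #|~: (low k :|: F)|.
  by rewrite [LHS]cardsCs [RHS]cardsCs !setCK !cardL // cF2.
have := m2 _ cC; rewrite !nbhd_setC_low_setU //.
by rewrite !(cardsU_disjoint (high_down _)) leq_add2l.
Qed.

Definition translate c x : T := symdiff x c.

Lemma translateK c : involutive (translate c).
Proof. by move=> x; apply/setP => i; rewrite !in_symdiff addbK. Qed.

Lemma dist_translate c x y : dist (translate c x) (translate c y) = dist x y.
Proof.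
rewrite /dist (_ : symdiff _ _ = symdiff x y) //; apply/setP => i.
by rewrite !in_symdiff; case: (i \in x); case: (i \in y); case: (i \in c).
Qed.

Lemma dist_translate_center c x : dist c (translate c x) = #|x|.
Proof.
rewrite /dist (_ : symdiff _ _ = x) //; apply/setP => i.
by rewrite !in_symdiff; case: (i \in x); case: (i \in c).
Qed.

Lemma mem_translate c A x : (x \in translate c @: A) = (translate c x \in A).
Proof. by rewrite -{1}(translateK c x) (mem_imset _ _ (can_inj (translateK c))). Qed.

Lemma card_translate c A : #|translate c @: A| = #|A|.
Proof. exact/card_imset/can_inj/translateK. Qed.

Lemma nbhd_translate c t A : nbhd t (translate c @: A) = translate c @: nbhd t A.
Proof.
apply/setP => x; rewrite mem_translate !inE existsb_imset.
by apply: eq_existsb => y; rewrite -{1}(translateK c x) dist_translate.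
Qed.

Lemma setC_translate c A : ~: (translate c @: A) = translate c @: ~: A.
Proof. by apply/setP => x; rewrite !inE !mem_translate inE. Qed.

Lemma nbhd_minimal_translate c t A : nbhd_minimal t A -> nbhd_minimal t (translate c @: A).
Proof.
move=> minA B cB; rewrite nbhd_translate card_translate.
have := minA (translate c @: B); rewrite nbhd_translate !card_translate; apply.
by rewrite cB card_translate.
Qed.

Lemma extremal_translate c A : extremal A -> extremal (translate c @: A).
Proof.
move=> extA t t0; have [minA minAC] := extA t t0.
by rewrite setC_translate; split; apply: nbhd_minimal_translate.
Qed.

Lemma translate_ball_sandwich c r A : ball c r \subset A -> A \subset ball c (r + 1)%R ->
  exists k, low k \subset translate c @: A /\ translate c @: A \subset low k.+1.
Proof.
move=> rA Ar.
have in_ball x rho : (translate c x \in ball c rho) = (#|x|%:Z <= rho)%R.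
  by rewrite inE dist_translate_center.
case: r rA Ar => m rA Ar; [exists m.+1 | exists 0]; split; apply/subsetP => x.
- by rewrite in_low ltnS => xm; rewrite mem_translate (subsetP rA) // in_ball lez_nat.
- by rewrite mem_translate => /(subsetP Ar); rewrite in_ball -PoszD lez_nat addn1 in_low.
- by rewrite in_low.
by rewrite mem_translate => /(subsetP Ar); rewrite in_ball in_low NegzE; lia.
Qed.

Lemma low_setU_level k S : low k \subset S -> S \subset low k.+1 ->
  S = low k :|: (S :&: level 0 k).
Proof.
move=> lowS Slow; apply/setP => x; rewrite in_setU in_setI level0 in_low.
have [xk | kx] := ltnP #|x| k; first by rewrite (subsetP lowS) ?in_low.
case xS: (x \in S) => //=; move: (subsetP Slow x xS); rewrite in_low ltnS => xk.
by rewrite eqn_leq xk kx.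
Qed.

Lemma sim_initial_low_setU k F : F \subset level 0 k -> lex_initial 0 k F ->
  sim_initial_segment (low k :|: F).
Proof.
move=> Fl lexF x y xLF; rewrite /sim_lt in_setU in_low.
have xk : #|x| <= k.
  case/setUP: xLF => [|/(subsetP Fl)]; first by rewrite in_low => /ltnW.
  by rewrite level0 => /eqP->.
case/orP => [yx | /andP[/eqP yx lex]]; first by rewrite (leq_trans yx xk).
case/setUP: xLF => [|xF]; first by rewrite in_low yx => ->.
by rewrite (lexF x) ?orbT // level0 yx -level0 (subsetP Fl).
Qed.

End Cube.
Arguments low {n} k.

Theorem proposition6 (n : nat) (A : {set {set 'I_n}}) :
  extremal A ->
  (exists (t : {set 'I_n}) (r : int), ball t r \subset A /\ A \subset ball t (r + 1)%R) ->
  exists S : {set {set 'I_n}}, sim_initial_segment S /\ cube_isomorphic A S.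
Proof.
move=> extA [c [r [rA Ar]]].
have [k [lowA Alow]] := translate_ball_sandwich rA Ar.
set F := translate c @: A :&: level 0 k.
have AE : translate c @: A = low k :|: F := low_setU_level lowA Alow.
have Fl : F \subset level 0 k := subsetIr _ _.
have optF : shadow_optimal 0 k F.
  by apply: shadow_optimal_extremal Fl _; rewrite -AE; apply: extremal_translate.
have [s fs lexF] := shadow_optimal_lex_initial Fl optF.
exists (low k :|: relabel s F); split.
  exact: sim_initial_low_setU (relabel_sub_level fs Fl) lexF.
exists s, (s @: c); rewrite -(relabel_low s k) -relabelU -AE /relabel -imset_comp.
by apply: eq_imset => x; rewrite /cube_aut /translate /= pimset_symdiff.
Qed.
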